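(* Let $C$ be a quasi-category and $c\in C_0$ a vertex. Then for every $n\geq2$ the homotopy monoid $\tau_n(C^e,c)$ is a group.
   Context: A stratified simplicial set is a pair $(X,tX)$ where $X$ is a simplicial set and $tX$ is a set of simplices of $X$ (thin simplices) containing all degenerate simplices and no $0$-simplices; stratified maps are simplicial maps preserving thin simplices. For a quasi-category $C$, $C^e$ is the stratified simplicial set with underlying simplicial set $C$ whose thin simplices are the degenerate simplices, all simplices of dimension $\ge 2$, and the $1$-simplices of $C$ that are equivalences (isomorphisms in the homotopy category of $C$); $C^e$ is a weak complicial set. In particular every simplex of $C^e$ of dimension $\geq 2$ is thin. For $n\ge1$, $\Delta[n]_t$ is $\Delta[n]$ with thin simplices the degenerate ones and $\mathrm{Id}_{[n]}$. For $k\in[n]$, $\Delta^k[n]$ is $\Delta[n]$ with thin simplices the degenerate ones and all $\alpha:[m]\to[n]$ with $\{k-1,k,k+1\}\cap[n]\subset\mathrm{Im}(\alpha)$. The product $X\circledast Y$ has underlying simplicial set $X\times Y$, with $(x,y)$ thin iff $x$ and $y$ are thin. For stratified maps $f,g:A\to X$ and an inclusion $B\hookrightarrow A$ with $f|_B=g|_B$, $f\sim_B g$ means there is a stratified map $H:A\circledast\Delta[1]_t\to X$ with $H|_{A\times\{0\}}=f$, $H|_{A\times\{1\}}=g$ and $H|_{B\circledast\Delta[1]_t}=f|_B\circ\mathrm{proj}_B$; $n$-simplices are regarded as stratified maps from $\Delta[n]$ with only degenerate simplices thin. For a weak complicial set $X$, vertex $x$, and $n\ge1$, $\tau_n(X,x)$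 is the set of $\sim_{\partial\Delta[n]}$-classes of $n$-simplices $\alpha$ whose restriction to $\partial\Delta[n]$ is constant at $x$, with multiplication $[\alpha][\beta]=[d_n\theta]$ where $\theta:\Delta^n[n+1]\to X$ is any stratified map with $d_{n-1}\theta=\alpha$, $d_{n+1}\theta=\beta$, and $d_i\theta$ constant at $x$ for $i\notin\{n-1,n,n+1\}$; this is a monoid with unit the class of the constant simplex at $x$. *)

From mathcomp Require Import all_boot.
Set Implicit Arguments.
Unset Strict Implicit.
Unset Printing Implicit Defensive.

Definition monob m n (f : {ffun 'I_m.+1 -> 'I_n.+1}) : bool :=
  [forall i : 'I_m.+1, forall j : 'I_m.+1, (i <= j) ==> (f i <= f j)].

Definition Mor m n := {f : {ffun 'I_m.+1 -> 'I_n.+1} | monob f}.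

Lemma comp_mono l m n (g : {ffun 'I_m.+1 -> 'I_n.+1}) (f : {ffun 'I_l.+1 -> 'I_m.+1}) :
  monob g -> monob f -> monob [ffun i => g (f i)].
Proof.
move=> /forallP Hg /forallP Hf; apply/forallP=> i; apply/forallP=> j; rewrite !ffunE.
apply/implyP=> Hij; have /forallP/(_ j)/implyP/(_ Hij) Hf' := Hf i.
by have /forallP/(_ (f j))/implyP/(_ Hf') := Hg (f i).
Qed.

Lemma id_mono n : monob [ffun i : 'I_n.+1 => i].
Proof. by apply/forallP=> i; apply/forallP=> j; rewrite !ffunE; apply/implyP. Qed.

Definition compM l m n (g : Mor m n) (f : Mor l m) : Mor l n :=
  exist _ [ffun i => val g (val f i)] (comp_mono (valP g) (valP f)).

Definition idM n : Mor n n := exist _ [ffun i => i] (id_mono n).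

Lemma compMA k l m n (h : Mor m n) (g : Mor l m) (f : Mor k l) :
  compM h (compM g f) = compM (compM h g) f.
Proof. by apply: val_inj; apply/ffunP=> i; rewrite /= !ffunE. Qed.

Lemma compM1 m n (g : Mor m n) : compM g (idM m) = g.
Proof. by apply: val_inj; apply/ffunP=> i; rewrite /= !ffunE. Qed.

Record sSet := SSet {
  sob :> nat -> Type;
  sact : forall m n, Mor m n -> sob n -> sob m;
  sact_id : forall n (x : sob n), sact (idM n) x = x;
  sact_comp : forall l m n (f : Mor l m) (g : Mor m n) (x : sob n),
      sact f (sact g x) = sact (compM g f) x }.

Record sMap (X Y : sSet) := SMap {
  smap :> forall n, X n -> Y n;
  smap_nat : forall m n (f : Mor m n) (x : X n),
      smap (@sact X _ _ f x) = @sact Y _ _ f (smap x) }.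

Definition Delta (n : nat) : sSet :=
  @SSet (fun m => Mor m n) (fun m k f a => compM a f)
        (fun k a => compM1 a) (fun l m k f g a => esym (compMA a g f)).

Definition prodS (X Y : sSet) : sSet.
Proof.
refine (@SSet (fun m => (X m * Y m)%type)
          (fun m k f p => (@sact X _ _ f p.1, @sact Y _ _ f p.2)) _ _).
- by move=> k [x y] /=; rewrite !sact_id.
- by move=> l m k f g [x y] /=; rewrite !sact_comp.
Defined.

Definition hornb n (k : nat) m (a : Mor m n) : bool :=
  [exists j : 'I_n.+1, (nat_of_ord j != k) && [forall i : 'I_m.+1, val a i != j]].

Lemma horn_closed n k l m (a : Mor m n) (f : Mor l m) :
  hornb k a -> hornb k (compM a f).
Proof.
case/existsP=> j /andP [Hj /forallP Ha]; apply/existsP; exists j.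
by rewrite Hj /=; apply/forallP=> i; rewrite ffunE.
Qed.

Definition Horn (n k : nat) : sSet.
Proof.
refine (@SSet (fun m => {a : Mor m n | hornb k a})
          (fun m l f a => exist _ (compM (val a) f) (horn_closed f (valP a))) _ _).
- by move=> l a; apply: val_inj; rewrite /= compM1.
- by move=> l m p f g a; apply: val_inj; rewrite /= compMA.
Defined.

Definition quasicat (C : sSet) : Prop :=
  forall n k, 0 < k < n -> forall h : sMap (Horn n k) C,
    exists s : sMap (Delta n) C, forall m (a : Horn n k m), s m (val a) = h m a.

Definition degenerate (X : sSet) n (x : X n) : Prop :=
  exists m (f : Mor n m) (y : X m), m < n /\ x = @sact X _ _ f y.

Lemma lift_mono n (i : 'I_n.+2) : monob [ffun j : 'I_n.+1 => lift i j].
Proof.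
apply/forallP=> j; apply/forallP=> j'; rewrite !ffunE; apply/implyP=> H.
by rewrite /= leq_bump2.
Qed.

Definition dface n (i : nat) : Mor n n.+1 :=
  exist (fun f => monob f) _ (lift_mono (inord i : 'I_n.+2)).

Definition face (X : sSet) n (i : nat) (x : X n.+1) : X n := @sact X _ _ (dface n i) x.

Lemma const_mono m n (c : 'I_n.+1) : monob [ffun _ : 'I_m.+1 => c].
Proof. by apply/forallP=> i; apply/forallP=> j; rewrite !ffunE leqnn implybT. Qed.

Definition constM m n (c : 'I_n.+1) : Mor m n := exist (fun f => monob f) _ (const_mono m c).

Definition const_s (X : sSet) n (x : X 0) : X n := @sact X _ _ (constM n ord0) x.

Definition surjb m n (b : Mor m n) : bool := [forall j : 'I_n.+1, [exists i : 'I_m.+1, val b i == j]].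

(* a is an n-simplex whose restriction to the boundary is constant at x *)
Definition sphere (X : sSet) n (x : X 0) (a : X n) : Prop :=
  forall m (b : Mor m n), ~~ surjb b -> @sact X _ _ b a = const_s m x.

Definition is_equiv (C : sSet) (f : C 1) : Prop :=
  exists (g : C 1) (s t : C 2),
    [/\ face 2 s = f, face 0 s = g & face 1 s = const_s 1 (face 1 f)] /\
    [/\ face 2 t = g, face 0 t = f & face 1 t = const_s 1 (face 0 f)].

Record strat := Strat { sS :> sSet; thin : forall n, sS n -> Prop }.

Definition stratMap (A X : strat) :=
  {f : sMap A X | forall n (a : A n), thin a -> thin (f n a)}.

Definition stratProd (A B : strat) : strat :=
  @Strat (prodS A B) (fun m p => thin p.1 /\ thin p.2).

Definition Delta_min n : strat := @Strat (Delta n) (fun m a => @degenerate (Delta n) m a).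

Definition Delta_t n : strat :=
  @Strat (Delta n) (fun m (a : Mor m n) =>
    @degenerate (Delta n) m a \/ (m = n /\ forall i : 'I_m.+1, nat_of_ord (val a i) = i)).

Definition DeltaK n k : strat :=
  @Strat (Delta n) (fun m (a : Mor m n) =>
    @degenerate (Delta n) m a \/
    forall j : nat, j <= n -> [|| j.+1 == k, j == k | j == k.+1] ->
      exists i, nat_of_ord (val a i) = j).

Definition Ce_thin1 (C : sSet) m : C m -> Prop :=
  match m return C m -> Prop with
  | 1 => fun x => is_equiv x
  | _ => fun _ => False
  end.

Definition Ce (C : sSet) : strat :=
  @Strat C (fun m x => degenerate x \/ 2 <= m \/ Ce_thin1 x).

(* a ~_{boundary Delta[n]} b, for n-simplices a, b viewed as stratified maps
   Delta[n] -> X (only degenerate simplices thin) *)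
Definition htpy_bd (X : strat) n (a b : X n) : Prop :=
  exists H : stratMap (stratProd (Delta_min n) (Delta_t 1)) X,
    forall m (bt : Mor m n),
      [/\ proj1_sig H m (bt, constM m ord0) = @sact X _ _ bt a,
          proj1_sig H m (bt, constM m ord_max) = @sact X _ _ bt b
        & ~~ surjb bt -> forall g : Mor m 1, proj1_sig H m (bt, g) = @sact X _ _ bt a].

(* [a][b] = [g] in tau_n(X, x): some theta : Delta^n[n+1] -> X with
   d_{n-1} theta = a, d_{n+1} theta = b, the other faces except d_n constant
   at x, and d_n theta ~ g. *)
Definition tau_mul (X : strat) (x : X 0) n (a b g : X n) : Prop :=
  exists th : stratMap (DeltaK n.+1 n) X,
    [/\ proj1_sig th n (dface n n.-1) = a,
        proj1_sig th n (dface n n.+1) = b,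
        (forall i, i <= n.+1 -> i != n.-1 -> i != n -> i != n.+1 ->
           proj1_sig th n (dface n i) = const_s n x)
      & htpy_bd (proj1_sig th n (dface n n)) g].

(* In C^e every simplex of dimension >= 2 is thin, so any (n+1)-simplex th of C
   whose faces d_i th, i <> n-1, n, n+1, are constant at c witnesses
   [d_(n-1) th][d_(n+1) th] = [d_n th] in tau_n; the group property thus reduces
   to filling inner horns of C.  Filling Lambda^(n-1)[n+1] with d_(n+1) = a and
   all other faces constant gives th with d_n th = c, hence b := d_(n-1) th
   satisfies [b][a] = 1.  Filling Lambda^(n-1)[n+2] with
   d_(n+2) = th, d_(n+1) = s_n a, d_n = s_(n-1) a and constant faces below n-1
   gives an (n+2)-simplex whose face d_(n-1) has faces a, c, b in positions
   n-1, n, n+1, hence [a][b] = 1. *)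
From mathcomp Require Import all_boot zify.
Set Implicit Arguments.
Unset Strict Implicit.
Unset Printing Implicit Defensive.

Lemma morP m N (f g : Mor m N) : (forall i, val f i = val g i :> nat) -> f = g.
Proof. by move=> fg; apply/val_inj/ffunP=> i; apply/val_inj/fg. Qed.

Lemma compME l m N (g : Mor m N) (f : Mor l m) i : val (compM g f) i = val g (val f i).
Proof. exact: ffunE. Qed.

Lemma idME n i : val (idM n) i = i.
Proof. exact: ffunE. Qed.

Lemma comp1M m n (g : Mor m n) : compM (idM n) g = g.
Proof. by apply: morP => i; rewrite compME idME. Qed.

Lemma dfaceE N j i : j <= N.+1 -> val (dface N j) i = bump j i :> nat.
Proof. by move=> jN; rewrite ffunE /= inordK. Qed.

Lemma codeg_mono N j : monob [ffun i : 'I_N.+2 => inord (minn (unbump j i) N) : 'I_N.+1].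
Proof.
apply/forallP=> i; apply/forallP=> i'; apply/implyP=> le_ii'.
by rewrite !ffunE !inordK ?ltnS ?geq_minr //; rewrite /unbump; lia.
Qed.

(* For [j <= N] this is the codegeneracy [s^j]; for every [j <= N.+1] it is a
   retraction of [dface N j]. *)
Definition codegM N j : Mor N.+1 N := exist (fun f => monob f) _ (codeg_mono N j).

Lemma codegME N j i : val (codegM N j) i = minn (unbump j i) N :> nat.
Proof. by rewrite ffunE /= inordK // ltnS geq_minr. Qed.

Lemma codegM_dface N j : j <= N.+1 -> compM (codegM N j) (dface N j) = idM N.
Proof.
move=> jN; apply: morP => i; rewrite compME codegME dfaceE // idME.
by have := ltn_ord i; rewrite /bump /unbump; lia.
Qed.

Lemma dface_dface N i j : i < j -> j <= N.+2 ->
  compM (dface N.+1 j) (dface N i) = compM (dface N.+1 i) (dface N j.-1).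
Proof.
by move=> ij jN; apply: morP => v; rewrite !compME !dfaceE /bump; lia.
Qed.

Lemma dface_inj N j m (f g : Mor m N) :
  j <= N.+1 -> compM (dface N j) f = compM (dface N j) g -> f = g.
Proof.
move=> jN /(congr1 (fun h => val h : {ffun _ -> _})) /ffunP fg.
apply: morP => i; move: (fg i); rewrite !ffunE => /(congr1 val).
by rewrite /= !inordK //; apply: (can_inj (bumpK j)).
Qed.

Definition misses m N (a : Mor m N) (j : nat) : bool := [forall i, val a i != j :> nat].

Lemma missesP m N (a : Mor m N) j : reflect (forall i, val a i != j :> nat) (misses a j).
Proof. exact: forallP. Qed.

Lemma misses_comp l m N (a : Mor m N) (f : Mor l m) j : misses a j -> misses (compM a f) j.
Proof. by move/missesP=> aj; apply/missesP=> i; rewrite compME. Qed.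

Lemma misses_dface N j : j <= N.+1 -> misses (dface N j) j.
Proof. by move=> jN; apply/missesP=> i; rewrite dfaceE // /bump; lia. Qed.

Lemma dface_codegM N j m (a : Mor m N.+1) :
  j <= N.+1 -> misses a j -> compM (dface N j) (compM (codegM N j) a) = a.
Proof.
move=> jN /missesP aj; apply: morP => i; rewrite !compME dfaceE // codegME.
by move: (aj i) (ltn_ord (val a i)); rewrite /bump /unbump; lia.
Qed.

Lemma misses_codegM N i j m (a : Mor m N.+1) :
  j <= N.+1 -> i != j -> misses a i -> misses a j ->
  misses (compM (codegM N j) a) (unbump j i).
Proof.
move=> jN ij /missesP ai /missesP aj; apply/missesP=> v; rewrite compME codegME.
by move: (ai v) (aj v) (ltn_ord (val a v)); rewrite /unbump; lia.
Qed.

Lemma misses_surjbN m N (b : Mor m N) j : j <= N -> misses b j -> ~~ surjb b.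
Proof.
move=> jN /missesP bj; apply/forallPn; exists (inord j); apply/existsPn=> i.
by apply: contra (bj i) => /eqP ->; rewrite inordK.
Qed.

Lemma surjbN_misses m N (b : Mor m N) : ~~ surjb b -> exists2 j, j <= N & misses b j.
Proof.
case/forallPn=> j /existsPn bj; exists j; first by rewrite -ltnS.
by apply/missesP=> i; apply: contra (bj i) => /eqP/val_inj ->.
Qed.

Lemma hornb_misses N k m (a : Mor m N) j : j <= N -> j != k -> misses a j -> hornb k a.
Proof.
move=> jN jk /missesP aj; apply/existsP; exists (inord j); rewrite inordK // jk.
by apply/forallP=> i; apply: contra (aj i) => /eqP ->; rewrite inordK.
Qed.

(* Off the horn, where no such [j] exists, the value [k] is junk. *)
Definition horn_vertex N k m (a : Mor m N) : nat :=
  if [pick j : 'I_N.+1 | (nat_of_ord j != k) && misses a j] is Some j then j else k.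

Lemma horn_vertexP N k m (a : Mor m N) : hornb k a ->
  [/\ horn_vertex k a <= N, horn_vertex k a != k & misses a (horn_vertex k a)].
Proof.
rewrite /horn_vertex; case: pickP => [j /andP [jk aj] _ | none].
  by rewrite -ltnS ltn_ord.
case/existsP=> j /andP [jk /forallP aj]; have := none j; rewrite jk /= => /negbT/negP[].
by apply/missesP=> i; apply: contra (aj i) => /eqP/val_inj ->.
Qed.

Section Simplices.
Variable X : sSet.

Definition degen N j (y : X N) : X N.+1 := sact (codegM N j) y.

Lemma sact_misses N j m (a : Mor m N.+1) (y : X N.+1) :
  j <= N.+1 -> misses a j -> sact a y = sact (compM (codegM N j) a) (face j y).
Proof. by move=> jN aj; rewrite /face sact_comp dface_codegM. Qed.

Lemma face_face N i j (y : X N.+2) :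
  i < j -> j <= N.+2 -> face i (face j y) = face j.-1 (face i y).
Proof. by move=> ij jN; rewrite /face !sact_comp dface_dface. Qed.

Lemma face_degen N j (y : X N) : j <= N -> face j (degen j y) = y.
Proof. by move=> jN; rewrite /face /degen sact_comp codegM_dface ?sact_id // leqW. Qed.

Lemma face_degenS N j (y : X N) : j <= N -> face j.+1 (degen j y) = y.
Proof.
move=> jN; rewrite /face /degen sact_comp -[RHS]sact_id; congr sact; apply: morP => v.
by rewrite compME codegME dfaceE // idME; have := ltn_ord v; rewrite /bump /unbump; lia.
Qed.

Lemma const_sact (x : X 0) l m (f : Mor l m) : sact f (const_s m x) = const_s l x.
Proof.
by rewrite /const_s sact_comp; congr sact; apply: morP => i; rewrite compME !ffunE.
Qed.

Lemma face_const (x : X 0) N j : face j (const_s N.+1 x) = const_s N x.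
Proof. exact: const_sact. Qed.

Variable c : X 0.

Lemma sphere_const n : sphere c (const_s n c).
Proof. by move=> m b _; rewrite const_sact. Qed.

Lemma sphere_misses n (a : X n) m (b : Mor m n) j :
  sphere c a -> j <= n -> misses b j -> sact b a = const_s m c.
Proof. by move=> a_sph jn bj; apply/a_sph/(misses_surjbN jn). Qed.

Lemma sphere_face n (a : X n.+1) i : sphere c a -> i <= n.+1 -> face i a = const_s n c.
Proof. by move=> a_sph i_n; apply: (sphere_misses a_sph i_n); apply: misses_dface. Qed.

Lemma sphere_face_degen n j i (a : X n) :
  sphere c a -> j <= n -> i <= n.+1 -> i != j -> i != j.+1 ->
  face i (degen j a) = const_s n c.
Proof.
move=> a_sph jn i_n ij ijS; rewrite /face /degen sact_comp.
(* [s^j d^i] misses [i] when [i < j] and [i - 1] when [i > j + 1] *)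
apply: (sphere_misses (j := i - (j < i))) => //; first lia.
apply/missesP=> v; rewrite compME codegME dfaceE //.
by have := ltn_ord v; rewrite /bump /unbump; lia.
Qed.

Lemma sphere_face_of_spheres n k (y : X n.+1) : k <= n.+1 ->
  (forall j, j <= n.+1 -> j != k -> sphere c (face j y)) -> sphere c (face k y).
Proof.
move=> k_n y_sph m b /surjbN_misses [v vn bv].
have a_k : misses (compM (dface n k) b) k by apply/misses_comp/misses_dface.
have a_w : misses (compM (dface n k) b) (bump k v).
  apply/missesP=> i; rewrite compME dfaceE //.
  by move/missesP: bv => /(_ i); rewrite /bump; lia.
rewrite /face sact_comp (sact_misses (j := bump k v)) //; last by rewrite /bump; lia.
apply: (sphere_misses (j := unbump (bump k v) k)).
- by apply: y_sph; rewrite /bump; lia.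
- by rewrite /bump /unbump; lia.
- by apply: misses_codegM => //; rewrite /bump; lia.
Qed.

End Simplices.

Definition yoneda (X : sSet) N (t : X N) : sMap (Delta N) X :=
  @SMap (Delta N) X (fun m a => sact a t) (fun l m f a => esym (sact_comp f a t)).

Lemma smap_yoneda (X : sSet) N (s : sMap (Delta N) X) m (a : Mor m N) :
  s m a = sact a (s N (idM N)).
Proof. by rewrite -smap_nat /= comp1M. Qed.

Definition horn_compatible (X : sSet) N k (x : nat -> X N.+1) : Prop :=
  forall i j, i < j <= N.+2 -> i != k -> j != k -> face i (x j) = face j.-1 (x i).

Section HornFiller.
Variables (C : sSet) (N k : nat) (x : nat -> C N.+1).
Hypothesis x_compat : horn_compatible k x.

Lemma horn_compatible_sact i j m (a : Mor m N.+2) :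
  i <= N.+2 -> j <= N.+2 -> i != k -> j != k -> misses a i -> misses a j ->
  sact (compM (codegM N.+1 i) a) (x i) = sact (compM (codegM N.+1 j) a) (x j).
Proof.
wlog ij : i j / i < j => [wlog_ij | iN jN ik jk ai aj].
  move=> iN jN ik jk ai aj; case: (ltngtP i j) => [ij|ji|->] //; first exact: wlog_ij.
  by symmetry; apply: wlog_ij.
have a_ji : misses (compM (codegM N.+1 j) a) i.
  by rewrite -[i in misses _ i](_ : unbump j i = i) ?misses_codegM //; rewrite /unbump; lia.
have a_ij : misses (compM (codegM N.+1 i) a) j.-1.
  by rewrite -[j.-1](_ : unbump i j = j.-1) ?misses_codegM //; rewrite /unbump; lia.
pose gi := compM (codegM N j.-1) (compM (codegM N.+1 i) a).
pose gj := compM (codegM N i) (compM (codegM N.+1 j) a).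
have ai_gi : compM (codegM N.+1 i) a = compM (dface N j.-1) gi.
  by rewrite dface_codegM //; lia.
have aj_gj : compM (codegM N.+1 j) a = compM (dface N i) gj.
  by rewrite dface_codegM //; lia.
clearbody gi gj.
(* [a] factors through [d^i d^(j-1) = d^j d^i] via both [gi] and [gj]; faces are monic *)
have gij : gi = gj.
  apply: (@dface_inj N j.-1); first lia.
  apply: (@dface_inj N.+1 i); first lia.
  rewrite -ai_gi dface_codegM // compMA -dface_dface // -compMA -aj_gj.
  by rewrite dface_codegM.
rewrite ai_gi aj_gj gij -!sact_comp; congr sact.
by symmetry; apply: x_compat; rewrite ?ij.
Qed.

Definition horn_glue m (a : Horn N.+2 k m) : C m :=
  let j := horn_vertex k (val a) in sact (compM (codegM N.+1 j) (val a)) (x j).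

Lemma horn_glue_nat l m (f : Mor l m) (a : Horn N.+2 k m) :
  horn_glue (sact f a) = sact f (horn_glue a).
Proof.
case: a => a ha; rewrite /horn_glue /= sact_comp -compMA.
have [jN jk aj] := horn_vertexP ha.
have [j'N j'k afj'] := horn_vertexP (horn_closed f ha).
by apply: horn_compatible_sact => //; apply: misses_comp.
Qed.

Definition horn_glue_map : sMap (Horn N.+2 k) C := SMap horn_glue_nat.

Lemma quasicat_horn_filler : quasicat C -> 0 < k < N.+2 ->
  exists y : C N.+2, forall j, j <= N.+2 -> j != k -> face j y = x j.
Proof.
move=> HC k_inner; have [s s_glue] := HC _ _ k_inner horn_glue_map.
exists (s N.+2 (idM N.+2)) => j jN jk.
have hj : hornb k (dface N.+1 j) := hornb_misses jN jk (misses_dface jN).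
rewrite /face -smap_yoneda (s_glue _ (exist (fun a => hornb k a) _ hj)) /= /horn_glue /=.
have [vN vk dv] := horn_vertexP hj.
by rewrite (@horn_compatible_sact _ j) ?misses_dface // codegM_dface ?sact_id.
Qed.

End HornFiller.

Lemma degenerate_sact (X : sSet) N (t : X N) m (a : Mor m N) :
  @degenerate (Delta N) m a -> degenerate (sact a t).
Proof. by case=> [l [f [b [lm ->]]]]; exists l, f, (sact b t); rewrite /= sact_comp. Qed.

Lemma DeltaK_thin_dim N k m (a : Mor m N) : 0 < k < N ->
  @thin (DeltaK N k) m a -> @degenerate (Delta N) m a \/ 2 <= m.
Proof.
move=> k_inner [a_deg | a_hits]; [by left | right].
have [i1 a_i1] := a_hits k.-1 ltac:(lia) ltac:(apply/orP; left; apply/eqP; lia).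
have [i2 a_i2] := a_hits k ltac:(lia) ltac:(by rewrite eqxx orbT).
have [i3 a_i3] := a_hits k.+1 ltac:(lia) ltac:(by rewrite eqxx !orbT).
have [d12 d13 d23] : [/\ i1 != i2 :> nat, i1 != i3 :> nat & i2 != i3 :> nat].
  by split; apply/eqP=> /val_inj E; move: a_i1 a_i2 a_i3; rewrite E; lia.
by move: (ltn_ord i1) (ltn_ord i2) (ltn_ord i3); lia.
Qed.

Section Ce.
Variable C : sSet.

Lemma yoneda_thin N k (t : C N) : 0 < k < N ->
  forall m (a : Mor m N), @thin (DeltaK N k) m a -> @thin (Ce C) m (yoneda t m a).
Proof.
move=> k_inner m a /(DeltaK_thin_dim k_inner) [a_deg | m_ge2].
- by left; apply: degenerate_sact.
- by right; left.
Qed.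

Definition yonedaK N k (t : C N) (k_inner : 0 < k < N) : stratMap (DeltaK N k) (Ce C) :=
  exist _ (yoneda t) (yoneda_thin t k_inner).

Lemma htpy_bd_refl n (y : C n) : htpy_bd (X := Ce C) y y.
Proof.
pose H := @SMap (prodS (Delta n) (Delta 1)) C (fun m p => sact p.1 y)
  (fun l m f p => esym (sact_comp f p.1 y)).
have H_thin m p : @thin (stratProd (Delta_min n) (Delta_t 1)) m p -> @thin (Ce C) m (H m p).
  by case=> p1_deg _; left; apply: degenerate_sact.
by exists (exist _ H H_thin).
Qed.

Variable c : C 0.

Lemma tau_mul_unit n (th : C n.+1) a b : 0 < n ->
  face n.-1 th = a -> face n.+1 th = b ->
  (forall i, i <= n -> i != n.-1 -> face i th = const_s n c) ->
  tau_mul (X := Ce C) c a b (const_s n c).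
Proof.
move=> n_gt0 th_a th_b th_c.
have k_inner : 0 < n < n.+1 by rewrite n_gt0 /=.
exists (yonedaK th k_inner); split => //= [i i_n ? ? ?|].
- by apply: th_c; lia.
- by rewrite -/(face n th) th_c //; [exact: htpy_bd_refl | lia].
Qed.

End Ce.

Section Inverses.
Variables (C : sSet) (HC : quasicat C) (c : C 0).

Lemma left_inverse_simplex n (a : C n) : 2 <= n -> sphere c a ->
  exists th : C n.+1,
    face n.+1 th = a /\ forall i, i <= n -> i != n.-1 -> face i th = const_s n c.
Proof.
case: n a => [//|n] a n_ge2 a_sph /=.
pose x j := if j == n.+2 then a else const_s n.+1 c.
have x_c j : j < n.+2 -> x j = const_s n.+1 c by move=> jn; rewrite /x ltn_eqF.
have x_compat : horn_compatible n x.
  move=> i j /andP [ij jn] _ _; rewrite (x_c i); last lia.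
  have [->|j_ne] := eqVneq j n.+2; last by rewrite x_c ?face_const //; lia.
  by rewrite /x eqxx face_const (sphere_face a_sph) //; lia.
have [th th_x] := quasicat_horn_filler x_compat HC ltac:(lia).
exists th; split => [|i i_n i_ne]; first by rewrite th_x ?/x ?eqxx //; lia.
by rewrite th_x ?x_c //; lia.
Qed.

Definition right_inverse_horn n (a : C n) (th : C n.+1) (j : nat) : C n.+1 :=
  if j == n.+2 then th else if j == n.+1 then degen n a
  else if j == n then degen n.-1 a else const_s n.+1 c.

Lemma right_inverse_horn_compatible n (a : C n) (th : C n.+1) : 2 <= n -> sphere c a ->
  face n.+1 th = a -> (forall i, i <= n -> i != n.-1 -> face i th = const_s n c) ->
  horn_compatible n.-1 (right_inverse_horn a th).
Proof.
move=> n_ge2 a_sph th_a th_c i j /andP [ij jn] ik jk.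
set x := right_inverse_horn a th.
have x_th : x n.+2 = th by rewrite /x /right_inverse_horn eqxx.
have x_n1 : x n.+1 = degen n a by rewrite /x /right_inverse_horn ltn_eqF ?eqxx.
have x_n : x n = degen n.-1 a.
  by rewrite /x /right_inverse_horn (@ltn_eqF n n.+2) // ltn_eqF ?eqxx.
have x_c i' : i' < n.-1 -> x i' = const_s n.+1 c.
  by move=> i'n; rewrite /x /right_inverse_horn !ltn_eqF //; lia.
have degen_face i' j' : j' <= n -> i' <= n.+1 -> i' != j' -> i' != j'.+1 ->
    face i' (degen j' a) = const_s n c by move=> *; apply: sphere_face_degen.
have [j_lt|[j_n|[j_n1|j_n2]]] : j < n.-1 \/ j = n \/ j = n.+1 \/ j = n.+2 by lia.
all: try subst j.
- by rewrite !x_c ?face_const //; lia.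
- by rewrite x_n x_c ?face_const ?degen_face //; lia.
- have [->|i_lt] : i = n \/ i < n.-1 by lia.
    have := @face_degenS C n n.-1 a (leq_pred n); rewrite prednK; last lia.
    by rewrite x_n1 x_n face_degen.
  by rewrite x_n1 x_c ?face_const ?degen_face //; lia.
- rewrite x_th.
  have [->|[->|i_lt]] : i = n.+1 \/ i = n \/ i < n.-1 by lia.
  + by rewrite th_a x_n1 face_degenS.
  + by rewrite th_c ?x_n ?degen_face //; lia.
  + by rewrite th_c ?x_c ?face_const //; lia.
Qed.

Lemma right_inverse_simplex n (a : C n) (th : C n.+1) : 2 <= n -> sphere c a ->
  face n.+1 th = a -> (forall i, i <= n -> i != n.-1 -> face i th = const_s n c) ->
  exists t : C n.+1, [/\ face n.-1 t = a, face n.+1 t = face n.-1 th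
    & forall i, i <= n -> i != n.-1 -> face i t = const_s n c].
Proof.
move=> n_ge2 a_sph th_a th_c.
have [y y_x] := quasicat_horn_filler
  (right_inverse_horn_compatible n_ge2 a_sph th_a th_c) HC ltac:(lia).
exists (face n.-1 y); split.
- rewrite -(@face_face C n n.-1 n y) ?y_x; try lia.
  rewrite /right_inverse_horn (@ltn_eqF n n.+2) // (@ltn_eqF n n.+1) // eqxx.
  by rewrite face_degen // leq_pred.
- rewrite -(@face_face C n n.-1 n.+2 y) ?y_x; try lia.
  by rewrite /right_inverse_horn eqxx.
move=> i i_n i_ne.
have [->|i_lt] : i = n \/ i < n.-1 by lia.
- rewrite -(@face_face C n n.-1 n.+1 y) ?y_x; try lia.
  by rewrite /right_inverse_horn ltn_eqF // eqxx (sphere_face_degen a_sph) //; lia.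
- rewrite face_face ?y_x; try lia.
  by rewrite /right_inverse_horn !ltn_eqF ?face_const //; lia.
Qed.

End Inverses.

Theorem mainTheorem7 (C : sSet) (HC : quasicat C) (c : C 0) (n : nat) :
  2 <= n ->
  forall a : C n, sphere c a ->
    exists b : C n, sphere c b /\
      tau_mul (X := Ce C) c a b (const_s n c) /\
      tau_mul (X := Ce C) c b a (const_s n c).
Proof.
move=> n_ge2 a a_sph.
have n_gt0 : 0 < n by apply: ltnW.
have [th [th_a th_c]] := left_inverse_simplex HC n_ge2 a_sph.
have [t [t_a t_b t_c]] := right_inverse_simplex HC n_ge2 a_sph th_a th_c.
exists (face n.-1 th); split; last split.
- apply: sphere_face_of_spheres => [|j j_n j_ne]; first lia.
  have [->|j_lt] : j = n.+1 \/ j <= n by lia.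
  + by rewrite th_a.
  + by rewrite th_c //; apply: sphere_const.
- exact: tau_mul_unit n_gt0 t_a t_b t_c.
- exact: tau_mul_unit n_gt0 erefl th_a th_c.
Qed.
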